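(* The left Kan extension $\mathrm{Lan}_{\blacktriangle} \colon \widehat{\Delta} \to \widehat{\overline{\square}}_\vee$ preserves monomorphisms.
   Context: $\mathbf{SLat}$ is the category of (join-)semilattices (sets with an associative, commutative, idempotent binary operation $\vee$) and $\vee$-preserving maps. $\overline{\square}_\vee$ is the full subcategory of $\mathbf{SLat}$ on finite inhabited semilattices whose induced order ($x\le y\iff x\vee y=y$) is a distributive lattice. $\Delta$ is the simplex category of finite nonempty linear orders $[n]$ and monotone maps, and $\blacktriangle\colon \Delta\hookrightarrow\overline{\square}_\vee$ regards $[n]$ as a semilattice with $\vee=\max$. $\widehat{\mathcal C}$ denotes the category of presheaves on $\mathcal C$, and $\mathrm{Lan}_\blacktriangle$ is the left adjoint of restriction along $\blacktriangle$. *)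

From Stdlib Require Import Relations FunctionalExtensionality PropExtensionality ProofIrrelevance.
From mathcomp Require Import all_boot.

Set Implicit Arguments.
Unset Strict Implicit.
Unset Printing Implicit Defensive.

(* A (concrete) category: objects, hom-types, identities, composition
   (comp g f = g o f).  The category laws hold for the concrete instances
   below; they are not needed to state the definitions. *)
Record cat := Cat {
  ob :> Type;
  hom : ob -> ob -> Type;
  idm : forall a, hom a a;
  comp : forall a b c, hom b c -> hom a b -> hom a c
}.
Arguments idm {C} a : rename.
Arguments comp {C a b c} _ _ : rename.

Record psh (C : cat) := Psh {
  sec :> C -> Type;
  act : forall a b : C, hom a b -> sec b -> sec a;
  act_id : forall (a : C) (x : sec a), act (idm a) x = x;
  act_comp : forall (a b c : C) (f : hom a b) (g : hom b c) (x : sec c),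
      act (comp g f) x = act f (act g x)
}.
Arguments act {C} p {a b} f x.

Unset Implicit Arguments.
Record nat_tr (C : cat) (X Y : psh C) := NatTr {
  cmp :> forall a : C, X a -> Y a;
  natural : forall (a b : C) (f : hom a b) (x : X b),
      cmp a (act X f x) = act Y f (cmp b x)
}.
Arguments NatTr {C X Y} cmp natural.
Arguments nat_tr {C} X Y.
Arguments cmp {C X Y} n a x.
Arguments natural {C X Y} n {a b} f x.
Set Implicit Arguments.

(* Monomorphism in the presheaf category: left-cancellable natural
   transformation (equality of natural transformations = equality of all
   components). *)
Definition is_mono (C : cat) (X Y : psh C) (f : nat_tr X Y) : Prop :=
  forall (Z : psh C) (g h : nat_tr Z X),
    (forall (a : C) (z : Z a), f a (g a z) = f a (h a z)) ->
    forall (a : C) (z : Z a), g a z = h a z.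

(* The simplex category Delta: objects n represent [n] = {0 < ... < n} *)

Definition dhom (m n : nat) :=
  {f : 'I_m.+1 -> 'I_n.+1 | forall i j : 'I_m.+1, (i <= j)%N -> (f i <= f j)%N}.

Definition did (n : nat) : dhom n n := exist (fun f : 'I_n.+1 -> 'I_n.+1 => forall i j : 'I_n.+1, (i <= j)%N -> (f i <= f j)%N) id (fun i j h => h).

Definition dcomp (a b c : nat) (g : dhom b c) (f : dhom a b) : dhom a c.
Proof.
exists (fun i => sval g (sval f i)).
by move=> i j h; apply: (proj2_sig g); apply: (proj2_sig f).
Defined.

Definition Delta : cat := @Cat nat dhom did dcomp.

(* The category of finite inhabited join-semilattices whose induced     *)
(* order (x <= y iff x \/ y = y) is a distributive lattice             *)

Record DSLat := DSLatMk {
  car :> finType;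
  join : car -> car -> car;
  joinA : forall x y z, join x (join y z) = join (join x y) z;
  joinC : forall x y, join x y = join y x;
  joinxx : forall x, join x x = x;
  inhab : (0 < #|car|)%N;
  distr_lattice : exists meet : car -> car -> car,
      (forall x y z, join z (meet x y) = meet x y <->
                     (join z x = x /\ join z y = y)) /\
      (forall x y z, meet x (join y z) = join (meet x y) (meet x z))
}.

Definition shom (A B : DSLat) :=
  {f : A -> B | forall x y, f (join x y) = join (f x) (f y)}.

Definition sid (A : DSLat) : shom A A := exist (fun f : A -> A => forall x y, f (join x y) = join (f x) (f y)) id (fun x y => erefl).

Definition scomp (A B C : DSLat) (g : shom B C) (f : shom A B) : shom A C.
Proof.
exists (fun x => sval g (sval f x)).
by move=> x y; rewrite (proj2_sig f) (proj2_sig g).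
Defined.

Definition Box : cat := @Cat DSLat shom sid scomp.

Lemma shom_eq (A B : DSLat) (f g : shom A B) :
  (forall x, sval f x = sval g x) -> f = g.
Proof.
case: f g => f Hf [g Hg] /= H.
have E := functional_extensionality _ _ H; subst g.
by rewrite (proof_irrelevance _ Hf Hg).
Qed.

(* The inclusion  tri : Delta -> Box,  [n] with join = max             *)

Definition joinI (n : nat) (i j : 'I_n.+1) : 'I_n.+1 := if (i <= j)%N then j else i.
Definition meetI (n : nat) (i j : 'I_n.+1) : 'I_n.+1 := if (i <= j)%N then i else j.

Lemma joinI_val n (i j : 'I_n.+1) : nat_of_ord (joinI i j) = maxn i j.
Proof.
by rewrite /joinI; case: leqP.
Qed.

Lemma meetI_val n (i j : 'I_n.+1) : nat_of_ord (meetI i j) = minn i j.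
Proof.
by rewrite /meetI; case: leqP.
Qed.

Lemma joinI_le n (i j : 'I_n.+1) : joinI i j = j <-> (i <= j)%N.
Proof.
split; first by move/(congr1 (@nat_of_ord _)); rewrite joinI_val => /maxn_idPr.
by move=> h; apply: val_inj; rewrite /= joinI_val; apply/maxn_idPr.
Qed.

Definition tri (n : nat) : DSLat.
Proof.
refine (@DSLatMk ('I_n.+1 : finType) (@joinI n) _ _ _ _ _).
- by move=> x y z; apply: val_inj; rewrite /= !joinI_val maxnA.
- by move=> x y; apply: val_inj; rewrite /= !joinI_val maxnC.
- by move=> x; apply: val_inj; rewrite /= !joinI_val maxnn.
- by rewrite card_ord.
- exists (@meetI n); split.
  + move=> x y z; rewrite !joinI_le meetI_val leq_min.
    by split; [move/andP | move=> [-> ->]].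
  + move=> x y z; apply: val_inj; rewrite /= !(joinI_val, meetI_val).
    by rewrite minn_maxr.
Defined.

Definition trimor (m n : nat) (t : dhom m n) : shom (tri m) (tri n).
Proof.
exists (sval t) => /= x y; apply: val_inj; rewrite /= !joinI_val.
have mono := proj2_sig t; rewrite /joinI.
case: leqP => h.
  by rewrite (maxn_idPr (mono _ _ h)).
by rewrite (maxn_idPl (mono _ _ (ltnW h))).
Defined.

Section Quot.
Variables (T : Type) (R : T -> T -> Prop).
Definition quot := {P : T -> Prop | exists p, P = R p}.
Definition cls (p : T) : quot := exist _ (R p) (ex_intro _ p erefl).
End Quot.

Section QMap.
Variables (T T' : Type) (R : T -> T -> Prop) (R' : T' -> T' -> Prop).
Hypothesis ReqR : equivalence _ R.
Hypothesis ReqR' : equivalence _ R'.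
Variable phi : T -> T'.
Hypothesis Hphi : forall p q, R p q -> R' (phi p) (phi q).

Let tr' : forall x y z, R' x y -> R' y z -> R' x z := Relation_Definitions.equiv_trans _ _ ReqR'.
Let sy' : forall x y, R' x y -> R' y x := Relation_Definitions.equiv_sym _ _ ReqR'.
Let rf : forall x, R x x := Relation_Definitions.equiv_refl _ _ ReqR.
Let rf' : forall x, R' x x := Relation_Definitions.equiv_refl _ _ ReqR'.

Lemma qmap_class (p0 : T) :
  (fun q => exists p, R p0 p /\ R' q (phi p)) = R' (phi p0).
Proof.
apply: functional_extensionality => q; apply: propositional_extensionality.
split.
- case=> p [H1 H2]; apply: tr' (Hphi H1) _; exact: sy'.
- move=> H; exists p0; split; [exact: rf | exact: sy'].
Qed.

Definition qmap (P : quot R) : quot R'.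
Proof.
exists (fun q => exists p, sval P p /\ R' q (phi p)).
case: P => P [p0 e] /=; exists (phi p0); subst P; exact: qmap_class.
Defined.

Lemma qmap_cls p : qmap (cls R p) = cls R' (phi p).
Proof.
apply: eq_sig_hprop => [P|]; first by move=> *; apply: proof_irrelevance.
exact: qmap_class.
Qed.
End QMap.

Lemma quot_cls (T : Type) (R : T -> T -> Prop) (P : quot R) : exists p, P = cls R p.
Proof.
case: P => P [p e]; exists p; subst P.
by apply: eq_sig_hprop => [Q|]; first by move=> *; apply: proof_irrelevance.
Qed.

(* Left Kan extension along tri, by the (pointwise) coend formula       *)
(*   (Lan X)(A) = ( Sum_n  Box(A, tri n) x X_n ) / ~                    *)
(* where ~ is the equivalence relation generated by                     *)
(*   (tri(theta) o g, x) ~ (g, X(theta) x)                              *)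
(* for g : A -> tri m, theta : [m] -> [n] in Delta, x in X_n.           *)

Section Lan.
Variable X : psh Delta.

Definition lanT (A : DSLat) := {n : nat & (shom A (tri n) * X n)%type}.

Definition lan_step (A : DSLat) (p q : lanT A) : Prop :=
  exists (m n : nat) (g : shom A (tri m)) (t : dhom m n) (x : X n),
    p = existT _ n (scomp (trimor t) g, x) /\
    q = existT _ m (g, act X (t : @hom Delta m n) x).

Definition lan_rel (A : DSLat) := clos_refl_sym_trans _ (@lan_step A).

Lemma lan_rel_equiv A : equivalence _ (@lan_rel A).
Proof. exact: clos_rst_is_equiv. Qed.

Definition lan_pre (A B : DSLat) (h : shom B A) (p : lanT A) : lanT B :=
  existT _ (projT1 p) (scomp (projT2 p).1 h, (projT2 p).2).

Lemma lan_pre_rel A B (h : shom B A) p q :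
  lan_rel p q -> lan_rel (lan_pre h p) (lan_pre h q).
Proof.
elim=> {p q} [p q [m [n [g [t [x [-> ->]]]]]] | p | p q _ IH | p q r _ IH1 _ IH2].
- apply: rst_step; exists m, n, (scomp g h), t, x; split=> //.
  by rewrite /lan_pre /=; congr existT; congr pair; apply: shom_eq.
- exact: rst_refl.
- exact: rst_sym.
- exact: rst_trans IH2.
Qed.

Definition lan_sec (A : DSLat) := quot (@lan_rel A).

Definition lan_act (B A : Box) (h : hom B A) : lan_sec A -> lan_sec B :=
  qmap (lan_rel_equiv A) (lan_rel_equiv B) (@lan_pre_rel A B h).

Lemma lan_act_id (A : Box) (x : lan_sec A) : lan_act (idm A) x = x.
Proof.
have [p ->] := quot_cls x; rewrite /lan_act qmap_cls; congr cls.
by case: p => n [g y]; rewrite /lan_pre /=; congr existT; congr pair; apply: shom_eq.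
Qed.

Lemma lan_act_comp (A B C : Box) (f : hom A B) (g : hom B C) (x : lan_sec C) :
  lan_act (comp g f) x = lan_act f (lan_act g x).
Proof.
have [p ->] := quot_cls x; rewrite /lan_act !qmap_cls; congr cls.
by case: p => n [k y]; rewrite /lan_pre /=; congr existT; congr pair; apply: shom_eq.
Qed.

Definition Lan : psh Box := @Psh Box lan_sec lan_act lan_act_id lan_act_comp.
End Lan.

Section LanMor.
Variables (X Y : psh Delta) (f : nat_tr X Y).

Definition lan_fmap (A : DSLat) (p : lanT X A) : lanT Y A :=
  existT _ (projT1 p) ((projT2 p).1, f _ (projT2 p).2).

Lemma lan_fmap_rel A p q : lan_rel p q -> lan_rel (@lan_fmap A p) (lan_fmap q).
Proof.
elim=> {p q} [p q [m [n [g [t [x [-> ->]]]]]] | p | p q _ IH | p q r _ IH1 _ IH2].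
- apply: rst_step; exists m, n, g, t, (f n x); split=> //.
  by rewrite /lan_fmap /= (natural f).
- exact: rst_refl.
- exact: rst_sym.
- exact: rst_trans IH2.
Qed.

Definition lan_mor_cmp (A : Box) : Lan X A -> Lan Y A :=
  qmap (lan_rel_equiv X A) (lan_rel_equiv Y A) (@lan_fmap_rel A).

Lemma lan_mor_natural (A B : Box) (h : hom A B) (x : Lan X B) :
  lan_mor_cmp (act (Lan X) h x) = act (Lan Y) h (lan_mor_cmp x).
Proof.
have [p ->] := quot_cls x; rewrite /= /lan_act /lan_mor_cmp !qmap_cls.
by case: p.
Qed.

Definition LanMor : nat_tr (Lan X) (Lan Y) := NatTr lan_mor_cmp lan_mor_natural.
End LanMor.

From Pilot Require Import Defs.
From Stdlib Require Import Relations FunctionalExtensionality PropExtensionality ProofIrrelevance.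
From Stdlib Require Import Classical FinFun Eqdep_dec PeanoNat.
From mathcomp Require Import all_boot zify.

(* An element of (Lan X)(A) is a class of pairs (g : A -> [n], x in X_n).  Each class contains
   exactly one reduced pair (h, y), with h surjective and y nondegenerate: factor g through its
   image face [j] and take the Eilenberg-Zilber decomposition of the restriction of x to [j].
   The reduced pair so obtained does not depend on the factorisation (by uniqueness in the
   Eilenberg-Zilber lemma), hence is invariant under the relation defining the coend.  A mono f
   of simplicial sets is injective in each degree and preserves nondegenerate simplices, so Lan f
   maps reduced pairs injectively to reduced pairs, and distinct classes stay distinct. *)

Set Implicit Arguments.
Unset Strict Implicit.
Unset Printing Implicit Defensive.

Lemma dhom_eq m n (f g : dhom m n) : sval f =1 sval g -> f = g.
Proof.
case: f g => f f_mono [g g_mono] /= /functional_extensionality fg; subst g.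
by rewrite (proof_irrelevance _ f_mono g_mono).
Qed.

Lemma homo_inj_ord_id k (f : 'I_k.+1 -> 'I_k.+1) :
  {homo f : i j / (i <= j)%N} -> injective f -> f =1 id.
Proof.
move=> f_mono f_inj.
have f_strict (i j : 'I_k.+1) : (i < j)%N -> (f i < f j)%N.
  move=> ij; rewrite ltn_neqAle f_mono ?(ltnW ij) // andbT.
  by apply: contraTneq ij => /val_inj /f_inj ->; rewrite ltnn.
have id_le_f (i : 'I_k.+1) : (i <= f i)%N.
  have [m] := ubnP i; elim: m i => // m IH [[|i] lti] /= /ltnSE le_im //.
  have lti' : (i < k.+1)%N by apply: ltnW.
  by apply: leq_ltn_trans (IH (Ordinal lti') le_im) (f_strict _ _ _).
(* f permutes 'I_k.+1, so f and id have the same sum; with id <= f pointwise, f = id. *)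
have sum_f : (\sum_(i < k.+1) i = \sum_(i < k.+1) f i)%N by rewrite (reindex_inj f_inj).
have /leqif_sum[_ ] := fun i (_ : true) => leqif_eq (id_le_f i).
rewrite sum_f eqxx => /esym/forallP f_id i.
by apply/val_inj/eqP; rewrite eq_sym; exact: implyP (f_id i) isT.
Qed.

Lemma surj_section j k (σ : dhom j k) (i : 'I_j.+1) : Surjective (sval σ) ->
  exists d : dhom k j, cancel (sval d) (sval σ) /\ sval d (sval σ i) = i.
Proof.
move=> σ_surj.
pose d l := if l == sval σ i then i else odflt i [pick p | sval σ p == l].
have dK : cancel d (sval σ).
  move=> l; rewrite /d; case: eqP => [-> //|_].
  case: pickP => [p /eqP //|no_p]; have [p σp] := σ_surj l.
  by move: (no_p p); rewrite σp eqxx.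
have d_mono (l l' : 'I_k.+1) : (l <= l')%N -> (d l <= d l')%N.
  move=> ll'; rewrite leqNgt; apply/negP => lt_d.
  have := proj2_sig σ _ _ (ltnW lt_d); rewrite !dK => l'l.
  have ll : l = l' by apply/val_inj/eqP; rewrite eqn_leq ll' l'l.
  by move: lt_d; rewrite ll ltnn.
by exists (exist _ d d_mono); rewrite /= /d eqxx.
Qed.

Section Face.
Variables (n : nat) (S : {set 'I_n.+1}).

Definition face_dim := #|S|.-1.
Definition face_incl (j : 'I_face_dim.+1) : 'I_n.+1 := nth ord0 (enum S) j.
Definition face_rank (u : 'I_n.+1) : 'I_face_dim.+1 := inord (index u (enum S)).

Lemma face_incl_lt (i j : 'I_face_dim.+1) : (i < j)%N -> (face_incl i < face_incl j)%N.
Proof.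
move=> ij; have jS : (j < size (enum S))%N.
  by move: (ltn_ord j) (leq_ltn_trans (leq0n i) ij); rewrite -cardE /face_dim; lia.
have S_sorted : sorted (relpre val ltn) (enum S).
  rewrite /enum_mem -enumT /= (sorted_filter (relpre_trans ltn_trans)) //.
  by rewrite -sorted_map val_enum_ord iota_ltn_sorted.
exact: (sorted_ltn_nth (relpre_trans ltn_trans) ord0 S_sorted) (ltn_trans ij jS) jS ij.
Qed.

Lemma face_incl_le (i j : 'I_face_dim.+1) : (i <= j)%N -> (face_incl i <= face_incl j)%N.
Proof. by rewrite leq_eqVlt => /predU1P[/val_inj -> // | /face_incl_lt/ltnW]. Qed.

Definition face_map : dhom face_dim n := exist _ face_incl face_incl_le.

Hypothesis S_gt0 : (0 < #|S|)%N.

Lemma size_enum_face : size (enum S) = face_dim.+1.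
Proof. by rewrite -cardE /face_dim prednK. Qed.

Lemma face_incl_in j : face_incl j \in S.
Proof. by rewrite -mem_enum mem_nth // size_enum_face. Qed.

Lemma face_rankK : cancel face_incl face_rank.
Proof.
move=> j; rewrite /face_rank /face_incl index_uniq ?enum_uniq ?inord_val //.
by rewrite size_enum_face.
Qed.

Lemma face_inclK : {in S, cancel face_rank face_incl}.
Proof.
move=> u uS; rewrite /face_incl /face_rank inordK ?nth_index ?mem_enum //.
by rewrite -size_enum_face index_mem mem_enum.
Qed.

Lemma face_rank_le : {in S &, {homo face_rank : u v / (u <= v)%N}}.
Proof.
move=> u v uS vS uv; rewrite leqNgt; apply/negP => /face_incl_lt.
by rewrite !face_inclK // ltnNge uv.
Qed.

Lemma face_rank_join : {in S &, {morph face_rank : u v / joinI u v}}.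
Proof.
move=> u v uS vS; rewrite /joinI; case: (leqP u v) => [uv | vu].
  by rewrite face_rank_le.
have vu' := face_rank_le vS uS (ltnW vu).
by case: leqP => // uv'; apply/val_inj/eqP; rewrite eqn_leq uv'.
Qed.

End Face.

Arguments face_incl {n} S j.
Arguments face_rank {n} S u.
Arguments face_map {n} S.

Section ImageFace.
Variables (T : finType) (n : nat) (g : T -> 'I_n.+1).

Definition image_face : {set 'I_n.+1} := [set g t | t : T].

Lemma mem_image_face t : g t \in image_face.
Proof. exact: imset_f. Qed.

Lemma image_face_gt0 (t : T) : (0 < #|image_face|)%N.
Proof. by apply/card_gt0P; exists (g t); apply: mem_image_face. Qed.

Lemma face_incl_rank_image t : face_incl image_face (face_rank image_face (g t)) = g t.
Proof. by rewrite face_inclK ?(image_face_gt0 t) ?mem_image_face. Qed.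

Lemma face_rank_image_surj : (0 < #|T|)%N -> Surjective (fun t => face_rank image_face (g t)).
Proof.
move=> /card_gt0P[t0 _] j.
have /imsetP[t _ gt] : face_incl image_face j \in [set g t | t : T].
  exact: face_incl_in (image_face_gt0 t0) j.
by exists t; rewrite -gt (face_rankK (image_face_gt0 t0)).
Qed.

End ImageFace.

Arguments image_face_gt0 {T n} g t.

Section FaceFactor.
Variables (j n : nat) (S : {set 'I_n.+1}) (φ : dhom j n).
Hypothesis φS : forall i, sval φ i \in S.

Let S_gt0 : (0 < #|S|)%N.
Proof. by apply/card_gt0P; exists (sval φ ord0). Qed.

Lemma face_factor_le : {homo (fun i => face_rank S (sval φ i)) : i i' / (i <= i')%N}.
Proof.
by move=> i i' ii'; apply: face_rank_le S_gt0 _ _ (φS i) (φS i') (proj2_sig φ _ _ ii').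
Qed.

Definition face_factor : dhom j (face_dim S) :=
  exist _ (fun i => face_rank S (sval φ i)) face_factor_le.

Lemma face_factorK : dcomp (face_map S) face_factor = φ.
Proof. by apply: dhom_eq => i /=; rewrite face_inclK. Qed.

End FaceFactor.

Section Degeneracies.
Variable X : psh Delta.

Lemma act_dcomp a b c (f : dhom a b) (g : dhom b c) (x : X c) :
  act X (dcomp g f) x = act X f (act X g x).
Proof. exact: (@act_comp Delta X a b c f g x). Qed.

Lemma act_section j k (σ : dhom j k) (d : dhom k j) (y : X k) :
  cancel (sval d) (sval σ) -> act X d (act X σ y) = y.
Proof.
move=> dK; rewrite -act_dcomp.
have -> : dcomp σ d = did k by apply: dhom_eq.
by rewrite act_id.
Qed.

Lemma act_section_eq j k k' (σ : dhom j k) (σ' : dhom j k') (d : dhom k j) (y : X k) (y' : X k') :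
  cancel (sval d) (sval σ) -> act X σ y = act X σ' y' -> y = act X (dcomp σ' d) y'.
Proof. by move=> dK E; rewrite act_dcomp -E act_section. Qed.

Definition degenerate k (y : X k) := exists k' (π : dhom k k') (z : X k'),
  [/\ (k' < k)%N, Surjective (sval π) & y = act X π z].

Definition nondegenerate k (y : X k) := ~ degenerate y.

Lemma nondegenerate_act_inj k k' (φ : dhom k k') (y : X k) (y' : X k') :
  nondegenerate y -> y = act X φ y' -> injective (sval φ).
Proof.
move=> y_nd y_φ; pose S := image_face (sval φ).
have φS i : sval φ i \in S by apply: mem_image_face.
have [lt_Sk | le_kS] := ltnP (face_dim S) k.
  case: y_nd; exists (face_dim S), (face_factor φS), (act X (face_map S) y'); split=> //.
    by apply: face_rank_image_surj; rewrite card_ord.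
  by rewrite -act_dcomp face_factorK.
have /imset_injP φ_inj : #|S| == #|'I_k.+1|.
  by rewrite eqn_leq leq_imset_card card_ord -(prednK (image_face_gt0 (sval φ) ord0)).
by move=> i i'; apply: φ_inj.
Qed.

Lemma eilenberg_zilber_exists s (w : X s) : exists k (τ : dhom s k) (z : X k),
  [/\ Surjective (sval τ), nondegenerate z & w = act X τ z].
Proof.
elim/ltn_ind: s w => s IH w.
have [[k' [π [z [lt_k's π_surj ->]]]] | w_nd] := classic (degenerate w); last first.
  by exists s, (did s), w; split=> //; [move=> l; exists l | rewrite act_id].
have [k [τ [z' [τ_surj z'_nd ->]]]] := IH k' lt_k's z.
exists k, (dcomp τ π), z'; split=> //; last by rewrite act_dcomp.
by move=> l; have [i <-] := τ_surj l; have [i' <-] := π_surj i; exists i'.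
Qed.

Lemma eilenberg_zilber_unique j k k' (σ : dhom j k) (σ' : dhom j k') (y : X k) (y' : X k') :
  Surjective (sval σ) -> Surjective (sval σ') -> nondegenerate y -> nondegenerate y' ->
  act X σ y = act X σ' y' ->
  existT (fun k => (dhom j k * X k)%type) k (σ, y) = existT _ k' (σ', y').
Proof.
move=> σ_surj σ'_surj y_nd y'_nd E.
have [d0 [d0K _]] := surj_section ord0 σ_surj.
have [d0' [d0'K _]] := surj_section ord0 σ'_surj.
have /leq_card := nondegenerate_act_inj y_nd (act_section_eq d0K E).
have /leq_card := nondegenerate_act_inj y'_nd (act_section_eq d0'K (esym E)).
rewrite !card_ord !ltnS => le_k'k le_kk'.
have ekk : k = k' by apply/eqP; rewrite eqn_leq le_kk' le_k'k.
subst k'.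
have σ'_d_id (d : dhom k j) : cancel (sval d) (sval σ) -> dcomp σ' d = did k.
  move=> dK; apply: dhom_eq; apply: homo_inj_ord_id (proj2_sig (dcomp σ' d)) _.
  exact: nondegenerate_act_inj y_nd (act_section_eq dK E).
have -> : y' = y by rewrite (act_section_eq d0K E) σ'_d_id ?act_id.
have -> // : σ' = σ.
apply: dhom_eq => i; have [d [dK di]] := surj_section i σ_surj.
have := congr1 (fun h : dhom k k => sval h (sval σ i)) (σ'_d_id d dK).
by rewrite /= di.
Qed.

End Degeneracies.

Lemma nondegenerate_map (X Y : psh Delta) (f : nat_tr X Y) k (y : X k) :
  (forall n, injective (f n)) -> nondegenerate y -> nondegenerate (f k y).
Proof.
move=> f_inj y_nd [k' [π [z [lt_k'k π_surj fy]]]]; apply: y_nd.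
have [d [dK _]] := surj_section ord0 π_surj.
have z_f : z = f _ (act X d y) by rewrite (natural f) fy act_section.
exists k', π, (act X d y); split=> //.
by apply: f_inj; rewrite (natural f) -z_f.
Qed.

Section LanNormalForm.
Variables (X : psh Delta) (A : DSLat).

(* q = (σ e, y) is reached from p = (δ e, x) by the zigzag
   (δ e, x) ~ (e, δ^* x) = (e, σ^* y) ~ (σ e, y). *)
Definition lan_nf (p q : lanT X A) : Prop :=
  let: existT n (g, x) := p in
  let: existT k (h, y) := q in
  nondegenerate y /\ exists j (e : shom A (tri j)) (δ : dhom j n) (σ : dhom j k),
    [/\ Surjective (sval e), Surjective (sval σ), g = scomp (trimor δ) e,
        h = scomp (trimor σ) e & act X δ x = act X σ y].

Section CanonicalForm.
Variables (n : nat) (g : shom A (tri n)) (x : X n).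
Let S := image_face (sval g).

Lemma face_rank_image_join a b :
  face_rank S (sval g (join a b)) = joinI (face_rank S (sval g a)) (face_rank S (sval g b)).
Proof. by rewrite (proj2_sig g) face_rank_join ?(image_face_gt0 _ a) ?mem_image_face. Qed.

Definition image_rank : shom A (tri (face_dim S)) :=
  exist _ (fun a => face_rank S (sval g a)) face_rank_image_join.

Variables (k : nat) (τ : dhom (face_dim S) k) (z : X k).
Hypotheses (τ_surj : Surjective (sval τ)) (z_nd : nondegenerate z).
Hypothesis x_ez : act X (face_map S) x = act X τ z.

Definition canonical_nf : lanT X A := existT _ k (scomp (trimor τ) image_rank, z).

Lemma lan_nf_canonical : lan_nf (existT _ n (g, x)) canonical_nf.
Proof.
split=> //; exists (face_dim S), image_rank, (face_map S), τ; split=> //.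
  exact: face_rank_image_surj (inhab A).
by apply: shom_eq => a /=; rewrite face_incl_rank_image.
Qed.

Lemma lan_nf_eq_canonical q : lan_nf (existT _ n (g, x)) q -> q = canonical_nf.
Proof.
case: q => k' [h y] [y_nd [j [e [δ [σ [e_surj σ_surj g_δe -> δx_σy]]]]]].
have ga a : sval g a = sval δ (sval e a) by rewrite g_δe.
have δS i : sval δ i \in S by have [a <-] := e_surj i; rewrite -ga mem_image_face.
pose π := face_factor δS.
have πτ_surj : Surjective (sval (dcomp τ π)).
  move=> l; have [m <-] := τ_surj l.
  have [a <-] := face_rank_image_surj (g := sval g) (inhab A) m.
  by exists (sval e a); rewrite /= ga.
have δx : act X δ x = act X π (act X τ z) by rewrite -x_ez -act_dcomp face_factorK.
have := eilenberg_zilber_unique σ_surj πτ_surj y_nd z_nd _.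
rewrite -δx_σy δx -act_dcomp => /(_ erefl).
pose along_e (t : {k & (dhom j k * X k)%type}) : lanT X A :=
  existT _ (projT1 t) (scomp (trimor (projT2 t).1) e, (projT2 t).2).
move=> /(congr1 along_e); rewrite /along_e /= => ->.
rewrite /canonical_nf; congr existT; congr pair.
by apply: shom_eq => a /=; rewrite ga.
Qed.

End CanonicalForm.

Lemma lan_nf_exists p : exists q, lan_nf p q.
Proof.
case: p => n [g x].
have [k [τ [z [τ_surj z_nd x_ez]]]] :=
  eilenberg_zilber_exists (act X (face_map (image_face (sval g))) x).
by exists (canonical_nf τ z); apply: lan_nf_canonical.
Qed.

Lemma lan_nf_fun p q q' : lan_nf p q -> lan_nf p q' -> q = q'.
Proof.
case: p => n [g x] nf_q nf_q'.
have [k [τ [z [τ_surj z_nd x_ez]]]] :=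
  eilenberg_zilber_exists (act X (face_map (image_face (sval g))) x).
have nf_eq := lan_nf_eq_canonical τ_surj z_nd x_ez.
by rewrite (nf_eq _ nf_q) (nf_eq _ nf_q').
Qed.

Lemma lan_nf_step p p' q : lan_step p p' -> lan_nf p' q -> lan_nf p q.
Proof.
move=> [m [n [g [t [x [-> ->]]]]]]; case: q => k [h y].
move=> [y_nd [j [e [δ [σ [e_surj σ_surj -> -> δtx_σy]]]]]].
split=> //; exists j, e, (dcomp t δ), σ; split=> //; first exact: shom_eq.
by rewrite act_dcomp.
Qed.

Lemma lan_nf_rel_invariant p p' q : lan_rel p p' -> lan_nf p q <-> lan_nf p' q.
Proof.
move=> pp'; elim: pp' q => {p p'} [p p' pp' | p | p p' _ IH | p p' p'' _ IH1 _ IH2] q.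
- split=> [nf_q | ]; last exact: lan_nf_step.
  have [q' nf_q'] := lan_nf_exists p'.
  by rewrite (lan_nf_fun nf_q (lan_nf_step pp' nf_q')).
- by [].
- by rewrite IH.
- by rewrite IH1 IH2.
Qed.

Lemma lan_nf_rel p q : lan_nf p q -> lan_rel p q.
Proof.
case: p => n [g x]; case: q => k [h y].
move=> [_ [j [e [δ [σ [_ _ -> -> δx_σy]]]]]].
apply: (rst_trans _ _ _ (existT _ j (e, act X δ x))).
  by apply: rst_step; exists j, n, e, δ, x.
by rewrite δx_σy; apply/rst_sym/rst_step; exists j, k, e, σ, y.
Qed.

Lemma lan_rel_iff_nf_eq p q p' q' : lan_nf p p' -> lan_nf q q' -> lan_rel p q <-> p' = q'.
Proof.
move=> nf_p nf_q; split=> [pq | p'q']; last rewrite -p'q' in nf_q.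
  by apply: lan_nf_fun nf_q; rewrite -(lan_nf_rel_invariant _ pq).
exact: rst_trans (lan_nf_rel nf_p) (rst_sym _ _ _ _ (lan_nf_rel nf_q)).
Qed.

End LanNormalForm.

Lemma eq_cls T (R : T -> T -> Prop) (R_equiv : equivalence T R) p q :
  cls R p = cls R q <-> R p q.
Proof.
case: R_equiv => R_refl R_trans R_sym; split=> [/(congr1 sval) /= -> | pq]; first exact: R_refl.
apply: eq_sig_hprop => [P|]; first by move=> *; apply: proof_irrelevance.
apply: functional_extensionality => r; apply: propositional_extensionality.
by split=> [pr | qr]; [exact: R_trans _ _ _ (R_sym _ _ pq) pr | exact: R_trans _ _ _ pq qr].
Qed.

Section LanMorInjective.
Variables (X Y : psh Delta) (f : nat_tr X Y).
Hypothesis f_inj : forall n, injective (f n).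

Lemma lan_nf_fmap A (p q : lanT X A) : lan_nf p q -> lan_nf (lan_fmap f p) (lan_fmap f q).
Proof.
case: p => n [g x]; case: q => k [h y].
move=> [y_nd [j [e [δ [σ [e_surj σ_surj g_δe h_σe δx_σy]]]]]].
split; first exact: nondegenerate_map.
by exists j, e, δ, σ; split=> //=; rewrite -!(natural f) δx_σy.
Qed.

Lemma lan_fmap_inj A : injective (@lan_fmap X Y f A).
Proof.
case=> n [g x] [m [g' x']]; rewrite /lan_fmap /= => E.
have em := congr1 (@projT1 _ _) E; simpl in em; subst m.
by case: (inj_pair2_eq_dec _ Nat.eq_dec _ _ _ _ E) => -> /f_inj ->.
Qed.

Lemma lan_mor_injective A : injective (LanMor f A).
Proof.
move=> P Q; have [p ->] := quot_cls P; have [q ->] := quot_cls Q.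
rewrite /= /lan_mor_cmp !qmap_cls => /(eq_cls (lan_rel_equiv Y A)) fp_fq.
apply/(eq_cls (lan_rel_equiv X A)).
have [p' nf_p] := lan_nf_exists p; have [q' nf_q] := lan_nf_exists q.
apply/(lan_rel_iff_nf_eq nf_p nf_q)/lan_fmap_inj.
exact/(lan_rel_iff_nf_eq (lan_nf_fmap nf_p) (lan_nf_fmap nf_q)).
Qed.

End LanMorInjective.

Definition standard_simplex (n : nat) : psh Delta.
Proof.
refine (@Psh Delta (fun a => dhom a n) (fun a b (t : dhom a b) (s : dhom b n) => dcomp s t) _ _).
- by move=> a s; apply: dhom_eq.
- by move=> a b c t u s; apply: dhom_eq.
Defined.

Definition classifying_map (X : psh Delta) n (x : X n) : nat_tr (standard_simplex n) X :=
  @NatTr Delta (standard_simplex n) X (fun a (s : dhom a n) => act X s x)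
    (fun a b (t : dhom a b) (s : dhom b n) => @act_comp Delta X a b n t s x).

Lemma is_mono_injective (X Y : psh Delta) (f : nat_tr X Y) :
  is_mono f -> forall n, injective (f n).
Proof.
move=> f_mono n x1 x2 fx12.
have := f_mono _ (classifying_map x1) (classifying_map x2) _ n (did n).
rewrite /= !act_id; apply=> a s /=.
by rewrite !(natural f) fx12.
Qed.

Lemma injective_is_mono (C : Defs.cat) (X Y : psh C) (f : nat_tr X Y) :
  (forall a, injective (f a)) -> is_mono f.
Proof. by move=> f_inj Z g h fgh a z; apply: f_inj. Qed.

Theorem mainTheorem9 (X Y : psh Delta) (f : nat_tr X Y) :
  is_mono f -> is_mono (LanMor f).
Proof.
move=> /is_mono_injective f_inj; apply: injective_is_mono => A.
exact: lan_mor_injective.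
Qed.
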